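(* Let $0\to A_i\to B_i\to C\to 0$ ($i=1,2$) be short exact sequences of finite abelian groups, and put $B=B_1\times_C B_2$. Assume that the sequence for $i=2$ is a direct sum of sequences of the form $0\to\mathbb Z/n\mathbb Z\to\mathbb Z/nb_j\mathbb Z\to\mathbb Z/b_j\mathbb Z\to0$ (first map multiplication by $b_j$, second the natural projection), for a fixed positive integer $n$ and positive integers $b_j$, and that $A_1$ is annihilated by $n$. Then the projection $B\to B_2$ splits. *)

(* finite abelian groups are finite Z-modules (finZmodType),
   group homomorphisms are additive maps {additive U -> V}. *)
From HB Require Import structures.
From mathcomp Require Import all_boot all_order all_algebra.
Set Implicit Arguments. Unset Strict Implicit. Unset Printing Implicit Defensive.
Import GRing.Theory.
Local Open Scope ring_scope.

Definition short_exact (A B C : zmodType) (f : A -> B) (g : B -> C) : Prop :=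
  [/\ injective f,
      (forall c : C, exists b : B, g b = c) &
      (forall b : B, g b = 0 <-> exists a : A, f a = b)].

Definition fibprod (B1 B2 C : zmodType) (g1 : B1 -> C) (g2 : B2 -> C)
  : pred (B1 * B2) := fun p => g1 p.1 == g2 p.2.

Definition proj2_splits (B1 B2 C : zmodType) (g1 : B1 -> C) (g2 : B2 -> C)
  : Prop :=
  exists s : {additive B2 -> B1 * B2},
    (forall y, s y \in fibprod g1 g2) /\ (forall y, (s y).2 = y).

(* The sequence 0 -> A --f--> B --g--> C -> 0 is (isomorphic to) the direct
   sum over j < m of the sequences
       0 -> Z/n -(mult b_j)-> Z/(n b_j) -> Z/b_j -> 0.
   Internally: B has elements x_j with n b_j x_j = 0 such that every element
   of B is uniquely of the form sum_j k_j x_j with 0 <= k_j < n b_j (i.e.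
   B = (+)_j <x_j> with <x_j> ~ Z/(n b_j)), and the image of f (= ker g) is
   the subgroup (+)_j <b_j x_j> (the copies of Z/n embedded by mult. by b_j).
   Then C ~ B / f(A) ~ (+)_j Z/b_j with g the natural projection. *)
Definition std_dirsum_seq (A B C : zmodType) (f : A -> B) (g : B -> C)
  (n m : nat) (b : 'I_m -> nat) : Prop :=
  exists x : 'I_m -> B,
  [/\ forall j, x j *+ (n * b j) = 0,
      (forall y : B, exists k : 'I_m -> nat,
          (forall j, (k j < n * b j)%N) /\ y = \sum_(j < m) x j *+ k j),
      (forall k k' : 'I_m -> nat,
          (forall j, (k j < n * b j)%N) -> (forall j, (k' j < n * b j)%N) ->
          \sum_(j < m) x j *+ k j = \sum_(j < m) x j *+ k' j ->
          forall j, k j = k' j) &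
      (forall y : B, (exists a : A, f a = y) <->
          exists k : 'I_m -> nat, y = \sum_(j < m) x j *+ (b j * k j))].

(* Decompose B2 = (+)_j <x_j> with x_j of order n b_j.  Since g2 (b_j x_j) = 0,
   the class c_j = g2 x_j satisfies b_j c_j = 0; lift it to y_j in B1.  Then
   b_j y_j lies in the image of A1, which is killed by n, so n b_j y_j = 0 and
   x_j |-> y_j extends to an additive map t : B2 -> B1 with g1 t = g2.  The
   splitting is y |-> (t y, y). *)
From HB Require Import structures.
From mathcomp Require Import all_boot all_order all_algebra.
Set Implicit Arguments. Unset Strict Implicit. Unset Printing Implicit Defensive.
Import GRing.Theory.
Local Open Scope ring_scope.

Lemma additive_of_morphism (U V : zmodType) (h : U -> V) :
  nmod_morphism h -> exists s : {additive U -> V}, forall u, s u = h u.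
Proof.
by move=> hh; exists (HB.pack_for {additive U -> V} h
                        (GRing.isNmodMorphism.Build U V h hh)).
Qed.

Lemma mulrn_modn (V : zmodType) (v : V) (N k : nat) :
  v *+ N = 0 -> v *+ (k %% N) = v *+ k.
Proof.
by move=> vN; rewrite {2}(divn_eq k N) mulrnDr mulnC mulrnA vN mul0rn add0r.
Qed.

Definition cyclic_decomposition (V : zmodType) (m : nat)
    (x : 'I_m -> V) (N : 'I_m -> nat) : Prop :=
  [/\ forall j, x j *+ N j = 0,
      (forall v : V, exists k : 'I_m -> nat,
          (forall j, (k j < N j)%N) /\ v = \sum_(j < m) x j *+ k j) &
      (forall k k' : 'I_m -> nat,
          (forall j, (k j < N j)%N) -> (forall j, (k' j < N j)%N) ->
          \sum_(j < m) x j *+ k j = \sum_(j < m) x j *+ k' j ->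
          forall j, k j = k' j)].

Section CyclicDecomposition.

Variables (V : zmodType) (m : nat) (x : 'I_m -> V) (N : 'I_m -> nat).
Hypothesis decV : cyclic_decomposition x N.

Lemma cyclic_decomposition_coord :
  exists c : V -> 'I_m -> nat, forall v,
    (forall j, (c v j < N j)%N) /\ v = \sum_(j < m) x j *+ c v j.
Proof.
case: decV => _ span _.
have coordP (v : V) : exists k : {ffun 'I_m -> nat},
    [forall j, (k j < N j)%N] && (v == \sum_(j < m) x j *+ k j).
  have [k [ltk ->]] := span v; exists [ffun j => k j].
  apply/andP; split; first by apply/forallP => j; rewrite ffunE.
  by apply/eqP/eq_bigr => j _; rewrite ffunE.
exists (fun v => xchoose (coordP v) : _ -> _) => v.
by have /andP[/forallP ltc /eqP] := xchooseP (coordP v).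
Qed.

Lemma cyclic_decomposition_extend (W : zmodType) (Y : 'I_m -> W) :
  (forall j, Y j *+ N j = 0) ->
  exists t : {additive V -> W}, forall k : 'I_m -> nat,
    t (\sum_(j < m) x j *+ k j) = \sum_(j < m) Y j *+ k j.
Proof.
move=> YN; have [xN span coord_unique] := decV.
have [c hc] := cyclic_decomposition_coord.
have N_gt0 j : (0 < N j)%N.
  by have [k [ltk _]] := span 0; apply: leq_ltn_trans (ltk j).
have c_sum k j : c (\sum_(i < m) x i *+ k i) j = (k j %% N j)%N.
  have [ltc eqc] := hc (\sum_(i < m) x i *+ k i).
  apply: coord_unique ltc (fun i => ltn_pmod _ (N_gt0 i)) _ j.
  by rewrite -eqc; apply: eq_bigr => i _; rewrite (mulrn_modn _ (xN i)).
pose t v := \sum_(j < m) Y j *+ c v j.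
have t_sum k : t (\sum_(j < m) x j *+ k j) = \sum_(j < m) Y j *+ k j.
  by apply: eq_bigr => j _; rewrite c_sum (mulrn_modn _ (YN j)).
have t_morph : nmod_morphism t.
  split.
    have zero_sum : (0 : V) = \sum_(j < m) x j *+ (fun=> 0%N) j by rewrite big1.
    by rewrite zero_sum t_sum big1.
  move=> u v; rewrite {1}(hc u).2 {1}(hc v).2 -big_split /=.
  rewrite (eq_bigr (fun j => x j *+ (c u j + c v j)%N)) => [|j _]; last first.
    by rewrite mulrnDr.
  by rewrite t_sum -big_split; apply: eq_bigr => j _; rewrite mulrnDr.
have [s st] := additive_of_morphism t_morph.
by exists s => k; rewrite st t_sum.
Qed.

End CyclicDecomposition.

Lemma std_dirsum_seq_decomposition (A B C : zmodType)
    (f : A -> B) (g : {additive B -> C}) (n m : nat) (b : 'I_m -> nat) :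
  short_exact f g -> std_dirsum_seq f g n b ->
  exists x : 'I_m -> B,
    cyclic_decomposition x (fun j => n * b j)%N /\
    forall j, g (x j) *+ b j = 0.
Proof.
case=> _ _ kerg [x [xN span coord_unique imf]].
exists x; split=> [|j]; first by split.
rewrite -raddfMn; apply/kerg/imf; exists (fun i => if i == j then 1%N else 0%N).
rewrite (bigD1 j) //= eqxx muln1 big1 ?addr0 // => i /negbTE ->.
by rewrite muln0.
Qed.

Lemma lift_annihilated (A B C : zmodType)
    (f : {additive A -> B}) (g : {additive B -> C}) (n d : nat) (c : C) :
  short_exact f g -> (forall a : A, a *+ n = 0) -> c *+ d = 0 ->
  exists y : B, g y = c /\ y *+ (n * d) = 0.
Proof.
case=> _ surjg kerg An cd; have [y gy] := surjg c.
have [a fa] : exists a, f a = y *+ d by apply/kerg; rewrite raddfMn /= gy.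
by exists y; split=> //; rewrite mulnC mulrnA -fa -raddfMn /= An raddf0.
Qed.

Lemma proj2_splits_lift (B1 B2 C : zmodType) (g1 : B1 -> C) (g2 : B2 -> C)
    (t : {additive B2 -> B1}) :
  (forall y, g1 (t y) = g2 y) -> proj2_splits g1 g2.
Proof.
move=> g1t; have s_morph : nmod_morphism (fun y => (t y, y)).
  by split=> [|y y']; rewrite ?raddf0 ?raddfD.
have [s st] := additive_of_morphism s_morph.
by exists s; split=> y; rewrite st // /fibprod unfold_in /= g1t.
Qed.

Theorem mainTheorem5
  (A1 B1 A2 B2 C : finZmodType)
  (f1 : {additive A1 -> B1}) (g1 : {additive B1 -> C})
  (f2 : {additive A2 -> B2}) (g2 : {additive B2 -> C})
  (n m : nat) (b : 'I_m -> nat)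
  (hn : (0 < n)%N) (hb : forall j, (0 < b j)%N)
  (ex1 : short_exact f1 g1) (ex2 : short_exact f2 g2)
  (hseq2 : std_dirsum_seq f2 g2 n b)
  (hA1 : forall a : A1, a *+ n = 0) :
  proj2_splits g1 g2.
Proof.
have [x [decB2 gxb]] := std_dirsum_seq_decomposition ex2 hseq2.
have liftx j : exists y : B1, g1 y = g2 (x j) /\ y *+ (n * b j) = 0.
  exact: lift_annihilated ex1 hA1 (gxb j).
have [Y hY] := fin_all_exists liftx.
have [t tx] := cyclic_decomposition_extend decB2 (fun j => (hY j).2).
apply: (proj2_splits_lift (t := t)) => y.
have [_ /(_ y) [k [_ ->]] _] := decB2.
by rewrite tx !raddf_sum; apply: eq_bigr => j _; rewrite !raddfMn (hY j).1.
Qed.
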